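(* Let $\mathcal{R}$ be a left-linear TRS, $\mathcal{R}_1,\mathcal{R}_2,\mathcal{C}\subseteq\mathcal{R}$, and $\mathcal{P}=\mathsf{PCPS}(\mathcal{R},\mathcal{C})$. Suppose every parallel critical pair $(t,u)$ between $\mathcal{R}$ and $\mathcal{R}$ satisfies $t\to_\mathcal{R}^*\cdot{}_\mathcal{R}\!\!\leftarrow^* u$. If $t\;{}_{\mathcal{R}_1}\!\Leftarrow s\Rightarrow_{\mathcal{R}_2}u$, then (i) $t\Rightarrow_{\mathcal{R}_2}\cdot\leftrightarrow^*_\mathcal{C}\cdot{}_{\mathcal{R}_1}\!\Leftarrow u$, or (ii) there exist $t',u'$ with $t\;{}_{\mathcal{R}_1}\!\Leftarrow t'\;{}_\mathcal{P}\!\!\leftarrow s\to_\mathcal{P} u'\Rightarrow_{\mathcal{R}_2}u$ and $t'\to_\mathcal{R}^*\cdot{}_\mathcal{R}\!\!\leftarrow^*u'$.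
   Context: A TRS is a set of rules $\ell\to r$ ($\ell\notin\mathcal{V}$, $\mathcal{V}ar(r)\subseteq\mathcal{V}ar(\ell)$); left-linear: no variable repeated in a left-hand side. Parallel step: $s\Rightarrow_\mathcal{R}t$ iff for some set $P$ of pairwise parallel positions of $s$ (no one a prefix of another), for each $p\in P$ there are $\ell\to r\in\mathcal{R}$, $\mu$ with $s|_p=\ell\mu$, $t|_p=r\mu$, and $t=s[t|_p]_{p\in P}$; $\Leftarrow$ is its inverse. $\leftrightarrow^*_\mathcal{C}$ is the conversion relation of $\mathcal{C}$. Parallel critical peak between $\mathcal{R}$ and $\mathcal{S}$: for a variant $\ell\to r$ of an $\mathcal{S}$-rule, a non-empty set $P$ of pairwise parallel function-symbol positions of $\ell$, variants $\ell_p\to r_p$ ($p\in P$) of $\mathcal{R}$-rules, all pairwise variable-disjoint, $\sigma$ a most general unifier of $\{\ell_p\approx\ell|_p\}_{p\in P}$, and $\ell_\epsilon\to r_\epsilon$ not a variant of $\ell\to r$ if $P=\{\epsilon\}$ (root): the peak $t\;{}_\mathcal{R}\!\Leftarrow s\xrightarrow{\epsilon}_\mathcal{S}u$ with $s=\ell\sigma$, $t=(\ell\sigma)[r_p\sigma]_{p\in P}$, $u=r\sigma$; $(t,u)$ is a parallel critical pair. $\mathsf{PCPS}(\mathcal{R},\mathcal{C})$ is the TRS $\{s\to t,\ s\to u\mid t\;{}_\mathcal{R}\!\Leftarrow s\xrightarrow{\epsilon}_\mathcal{R}u$ is a parallel critical peak between $\mathcal{R}$ and $\mathcal{R}$ and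 $t\leftrightarrow^*_\mathcal{C}u$ does not hold$\}$. *)

From Stdlib Require Import List Relations.
Import ListNotations.
Set Implicit Arguments.

(* Terms over function symbols F (arbitrary, arity implicit in the argument
   list) and a countably infinite set of variables (nat). *)
Inductive term (F : Type) : Type :=
| Var : nat -> term F
| Fun : F -> list (term F) -> term F.
Arguments Var {F} _.

Section TRS.
Variable F : Type.

Definition rule := (term F * term F)%type.
Definition trs := rule -> Prop.

Fixpoint vars (t : term F) : list nat :=
  match t with
  | Var x => [x]
  | Fun _ ts => flat_map vars ts
  end.

Fixpoint subst (sigma : nat -> term F) (t : term F) : term F :=
  match t with
  | Var x => sigma x
  | Fun f ts => Fun f (map (subst sigma) ts)
  end.

(* positions: sequences of (0-based) argument indices *)
Definition pos := list nat.

Fixpoint subterm (t : term F) (p : pos) : option (term F) :=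
  match p with
  | [] => Some t
  | i :: p' =>
      match t with
      | Var _ => None
      | Fun _ ts =>
          match nth_error ts i with
          | Some u => subterm u p'
          | None => None
          end
      end
  end.

(* t[u]_p (no change if p is not a position of t) *)
Fixpoint replace (t : term F) (p : pos) (u : term F) : term F :=
  match p with
  | [] => u
  | i :: p' =>
      match t with
      | Var _ => t
      | Fun f ts =>
          match nth_error ts i with
          | Some s => Fun f (firstn i ts ++ replace s p' u :: skipn (S i) ts)
          | None => t
          end
      end
  end.

Definition replace_all (s : term F) (P : list pos) (g : pos -> term F) : term F :=
  fold_right (fun p acc => replace acc p (g p)) s P.

Definition prefix (p q : pos) : Prop := exists r, q = p ++ r.

Definition parallel_set (P : list pos) : Prop :=
  NoDup P /\ forall p q, In p P -> In q P -> p <> q -> ~ prefix p q.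

Definition is_trs (R : trs) : Prop :=
  forall l r, R (l, r) -> (exists f ts, l = Fun f ts) /\ incl (vars r) (vars l).

Definition left_linear (R : trs) : Prop :=
  forall l r, R (l, r) -> NoDup (vars l).

Definition subtrs (R1 R : trs) : Prop := forall rl, R1 rl -> R rl.

Definition step (R : trs) (s t : term F) : Prop :=
  exists p l r sigma, R (l, r) /\ subterm s p = Some (subst sigma l) /\
                      t = replace s p (subst sigma r).

Definition root_step (R : trs) (s t : term F) : Prop :=
  exists l r sigma, R (l, r) /\ s = subst sigma l /\ t = subst sigma r.

Definition par_step (R : trs) (s t : term F) : Prop :=
  exists P : list pos, parallel_set P /\
    (forall p, In p P -> exists l r mu, R (l, r) /\
        subterm s p = Some (subst mu l) /\ subterm t p = Some (subst mu r)) /\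
    t = replace_all s P (fun p => match subterm t p with
                                  | Some u => u | None => Var 0 end).

Definition steps (R : trs) := clos_refl_trans (term F) (step R).
Definition conv (R : trs) := clos_refl_sym_trans (term F) (step R).
Definition joinable (R : trs) (t u : term F) : Prop :=
  exists v, steps R t v /\ steps R u v.

Definition renaming (pi : nat -> nat) : Prop :=
  exists pinv, (forall x, pinv (pi x) = x) /\ (forall x, pi (pinv x) = x).

Definition variant (rl rl' : rule) : Prop :=
  exists pi, renaming pi /\
    fst rl = subst (fun x => Var (pi x)) (fst rl') /\
    snd rl = subst (fun x => Var (pi x)) (snd rl').

Definition rule_vars (rl : rule) : list nat := vars (fst rl) ++ vars (snd rl).

Definition var_disjoint (rl rl' : rule) : Prop :=
  forall x, In x (rule_vars rl) -> ~ In x (rule_vars rl').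

Definition is_fun_pos (t : term F) (p : pos) : Prop :=
  exists f ts, subterm t p = Some (Fun f ts).

Definition unifier (sigma : nat -> term F) (E : list (term F * term F)) : Prop :=
  forall a b, In (a, b) E -> subst sigma a = subst sigma b.

Definition mgu (sigma : nat -> term F) (E : list (term F * term F)) : Prop :=
  unifier sigma E /\
  forall theta, unifier theta E ->
    exists delta, forall x, theta x = subst delta (sigma x).

(* parallel critical peak  t <=_R s ->^eps_S u  between R and S *)
Definition pc_peak (R S : trs) (s t u : term F) : Prop :=
  exists (l r : term F) (P : list pos) (rp : pos -> rule) (sigma : nat -> term F),
    (exists rl0, S rl0 /\ variant (l, r) rl0) /\
    P <> [] /\ parallel_set P /\
    (forall p, In p P -> is_fun_pos l p) /\
    (forall p, In p P -> exists rl0, R rl0 /\ variant (rp p) rl0) /\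
    (forall p, In p P -> var_disjoint (rp p) (l, r)) /\
    (forall p q, In p P -> In q P -> p <> q -> var_disjoint (rp p) (rp q)) /\
    mgu sigma (map (fun p => (fst (rp p), match subterm l p with
                                          | Some v => v | None => Var 0 end)) P) /\
    (P = [[]] -> ~ variant (rp []) (l, r)) /\
    s = subst sigma l /\
    t = replace_all (subst sigma l) P (fun p => subst sigma (snd (rp p))) /\
    u = subst sigma r.

Definition PCPS (R C : trs) : trs :=
  fun rl => exists s t u, pc_peak R R s t u /\ ~ conv C t u /\
                          (rl = (s, t) \/ rl = (s, u)).

End TRS.

(* A peak t <=_R1 s =>_R2 u is then analysed
   by induction on s ([par_peak_closes]).  When both steps are below the root,
   the argument peaks are combined ([fun_peak_closes]).  When one of them, with
   rule l -> r, is at the root, the other parallel step out of the instance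
   l mu is decomposed, using the linearity of l, into steps inside mu and root
   steps at a parallel set P of function positions of l ([decompose_par_step]).
   If P is empty the two steps commute; if the only redex is a variant of
   l -> r at the root, both results coincide ([variant_root_overlap]);
   otherwise the rules at P are renamed apart ([RenamingApart]) and a most
   general unifier, which exists by the unification algorithm
   ([unifiable_has_mgu]), exhibits the peak as an instance of a parallel
   critical peak ([overlap_cases]).  That critical peak is either
   C-convertible, giving alternative (i), or contributes its two rules to
   PCPS(R, C), giving alternative (ii) ([root_peak_closes]). *)
From Stdlib Require Import List Relations Lia Arith Classical.
Import ListNotations.

Section TermRewriting.
Context {F : Type}.

Fixpoint term_ind_nested (P : term F -> Prop)
  (HV : forall x, P (Var x)) (HF : forall f ts, Forall P ts -> P (Fun f ts))
  (t : term F) : P t :=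
  match t with
  | Var x => HV x
  | Fun f ts => HF f ts ((fix go (l : list (term F)) : Forall P l :=
       match l with
       | [] => Forall_nil _
       | u :: us => Forall_cons _ (term_ind_nested P HV HF u) (go us)
       end) ts)
  end.

Lemma subst_comp (a b : nat -> term F) t :
  subst a (subst b t) = subst (fun x => subst a (b x)) t.
Proof.
  induction t using term_ind_nested; simpl; auto.
  f_equal. rewrite map_map. induction H; simpl; auto. f_equal; auto.
Qed.

Lemma subst_ext_vars (a b : nat -> term F) t :
  (forall x, In x (vars t) -> a x = b x) -> subst a t = subst b t.
Proof.
  induction t using term_ind_nested; simpl; intros Hx; auto.
  f_equal. induction H; simpl in *; auto.
  f_equal; [apply H | apply IHForall]; intros; apply Hx, in_or_app; auto.
Qed.

Lemma subst_eq_vars (a b : nat -> term F) t :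
  subst a t = subst b t -> forall x, In x (vars t) -> a x = b x.
Proof.
  induction t using term_ind_nested; simpl; intros E y Hy.
  - destruct Hy as [<-|[]]; auto.
  - injection E as E. induction H; simpl in *; [destruct Hy|].
    injection E as E1 E2. apply in_app_or in Hy as [Hy|Hy]; auto.
Qed.

Lemma subst_Var (t : term F) : subst (fun x => Var x) t = t.
Proof.
  induction t using term_ind_nested; simpl; auto. f_equal.
  induction H; simpl; auto. f_equal; auto.
Qed.

Lemma vars_ren (pi : nat -> nat) (t : term F) :
  vars (subst (fun x => Var (pi x)) t) = map pi (vars t).
Proof.
  induction t using term_ind_nested; simpl; auto.
  induction H; simpl; auto. rewrite map_app. f_equal; auto.
Qed.

Lemma vars_subst (th : nat -> term F) t y :
  In y (vars (subst th t)) -> exists z, In z (vars t) /\ In y (vars (th z)).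
Proof.
  induction t as [x|f ts IH] using term_ind_nested; simpl; intros H; [exists x; auto|].
  induction IH; simpl in *; [destruct H|].
  apply in_app_or in H as [H|H].
  - destruct (H0 H) as [z [? ?]]. exists z. split; auto. apply in_or_app; auto.
  - destruct (IHIH H) as [z [? ?]]. exists z. split; auto. apply in_or_app; auto.
Qed.

Fixpoint mapi {A B : Type} (k : nat) (h : nat -> A -> B) (l : list A) : list B :=
  match l with [] => [] | x :: l' => h k x :: mapi (S k) h l' end.

Lemma length_mapi {A B} k (h : nat -> A -> B) l : length (mapi k h l) = length l.
Proof. revert k; induction l; simpl; auto. Qed.

Lemma nth_error_mapi {A B} k (h : nat -> A -> B) l i :
  nth_error (mapi k h l) i = option_map (h (k + i)) (nth_error l i).
Proof.
  revert k i; induction l; intros k i; destruct i; simpl; auto.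
  - rewrite Nat.add_0_r; auto.
  - rewrite IHl. do 2 f_equal. lia.
Qed.

Lemma mapi_ext_lt {A B} k (h1 h2 : nat -> A -> B) l :
  (forall j x, k <= j < k + length l -> h1 j x = h2 j x) -> mapi k h1 l = mapi k h2 l.
Proof.
  revert k; induction l; intros k H; simpl in *; auto.
  f_equal; [apply H; lia | apply IHl; intros; apply H; lia].
Qed.

Lemma mapi_id {A} k (h : nat -> A -> A) l :
  (forall j x, k <= j -> h j x = x) -> mapi k h l = l.
Proof.
  revert k; induction l; intros k H; simpl; auto.
  f_equal; [apply H; lia | apply IHl; intros; apply H; lia].
Qed.

Lemma mapi_mapi {A B C} k (h1 : nat -> B -> C) (h2 : nat -> A -> B) l :
  mapi k h1 (mapi k h2 l) = mapi k (fun j x => h1 j (h2 j x)) l.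
Proof. revert k; induction l; intros; simpl; f_equal; auto. Qed.

Lemma mapi_upd {A} k i (g : A -> A) l s : nth_error l i = Some s ->
  mapi k (fun j x => if j =? k + i then g x else x) l = firstn i l ++ g s :: skipn (S i) l.
Proof.
  revert k i; induction l; intros k i H; destruct i; simpl in *; try discriminate.
  - injection H as <-. rewrite Nat.add_0_r, Nat.eqb_refl. f_equal.
    apply mapi_id. intros. destruct (Nat.eqb_spec j k); auto; lia.
  - destruct (Nat.eqb_spec k (k + S i)); [lia|]. f_equal.
    rewrite <- (IHl (S k) i H). apply mapi_ext_lt.
    intros. replace (S k + i) with (k + S i) by lia; auto.
Qed.

Lemma nth_error_upd_other {A} (ts : list A) j i y s : nth_error ts j = Some s -> i <> j ->
  nth_error (firstn j ts ++ y :: skipn (S j) ts) i = nth_error ts i.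
Proof.
  intros Hj Hij. rewrite <- (mapi_upd 0 j (fun _ => y) ts s Hj), nth_error_mapi.
  simpl. destruct (nth_error ts i); simpl; auto. destruct (Nat.eqb_spec i j); congruence.
Qed.

Lemma nth_error_upd_same {A} (ts : list A) j y s : nth_error ts j = Some s ->
  nth_error (firstn j ts ++ y :: skipn (S j) ts) j = Some y.
Proof.
  intros Hj. rewrite <- (mapi_upd 0 j (fun _ => y) ts s Hj), nth_error_mapi, Hj.
  simpl. rewrite Nat.eqb_refl. auto.
Qed.

Lemma app_cons_facts {A} (pre post : list A) x :
  nth_error (pre ++ x :: post) (length pre) = Some x /\
  firstn (length pre) (pre ++ x :: post) = pre /\
  skipn (S (length pre)) (pre ++ x :: post) = post.
Proof. induction pre; simpl; auto. destruct IHpre as [? [? ?]]. rewrite H0. auto. Qed.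

Lemma Forall2_nth {A B} (Rel : A -> B -> Prop) a b i x :
  Forall2 Rel a b -> nth_error a i = Some x -> exists y, nth_error b i = Some y /\ Rel x y.
Proof.
  intros H; revert i; induction H; intros i Hi; destruct i; simpl in *; try discriminate.
  - injection Hi as <-; eauto.
  - eauto.
Qed.

Lemma Forall2_from_nth {A B} (Rel : A -> B -> Prop) a b :
  length a = length b ->
  (forall i x y, nth_error a i = Some x -> nth_error b i = Some y -> Rel x y) -> Forall2 Rel a b.
Proof.
  revert b; induction a; intros b Hl H; destruct b; simpl in *; try discriminate; constructor.
  - apply (H 0); auto.
  - apply IHa; auto. intros i; apply (H (S i)).
Qed.

Lemma NoDup_app_disjoint {A} (l1 l2 : list A) z : NoDup (l1 ++ l2) -> In z l1 -> In z l2 -> False.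
Proof.
  induction l1; simpl; intros H H1 H2; auto. inversion H as [|a0 l0 Hn Hnd]; subst.
  destruct H1 as [->|H1]; [apply Hn, in_or_app; auto|eauto].
Qed.

Lemma Forall2_collect {A B C} (Q : C -> A -> B -> Prop) (d : C) ss ts :
  Forall2 (fun s t => exists P, Q P s t) ss ts ->
  exists Ps, length Ps = length ss /\
    forall i s t, nth_error ss i = Some s -> nth_error ts i = Some t -> Q (nth i Ps d) s t.
Proof.
  induction 1; [exists []; split; auto; intros i s t H; destruct i; discriminate|].
  destruct H as [P HP]. destruct IHForall2 as [Ps [Hl HPs]].
  exists (P :: Ps). split; [simpl; auto|].
  intros i s t Hs Ht; destruct i; simpl in *; auto.
  injection Hs as <-; injection Ht as <-; auto.
Qed.

Lemma Forall2_map_same {A B} (Q : A -> Prop) (Rel : B -> B -> Prop) (f g : A -> B) l :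
  Forall Q l -> (forall x, Q x -> Rel (f x) (g x)) -> Forall2 Rel (map f l) (map g l).
Proof. induction 1; intros H'; simpl; constructor; auto. Qed.

Lemma Forall2_map_l {A B C} (Rel : B -> C -> Prop) (g : A -> B) l1 l2 :
  Forall2 Rel (map g l1) l2 -> Forall2 (fun a c => Rel (g a) c) l1 l2.
Proof. revert l2; induction l1; intros l2 H; inversion H; subst; constructor; auto. Qed.

Lemma Forall_Forall2_and {A B} (Q : A -> Prop) (Rel : A -> B -> Prop) l1 l2 :
  Forall Q l1 -> Forall2 Rel l1 l2 -> Forall2 (fun a b => Q a /\ Rel a b) l1 l2.
Proof. intros H1 H2; induction H2; inversion H1; subst; constructor; auto. Qed.


(** * Positions and replacement *)

Definition positions_below (i : nat) (P : list pos) : list pos :=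
  flat_map (fun q => match q with j :: p => if j =? i then [p] else [] | [] => [] end) P.

Definition tag_positions (k : nat) (Ps : list (list pos)) : list pos :=
  concat (mapi k (fun i L => map (cons i) L) Ps).

Lemma positions_below_cons i j p P :
  positions_below i ((j :: p) :: P) =
  if j =? i then p :: positions_below i P else positions_below i P.
Proof. unfold positions_below; simpl. destruct (j =? i); auto. Qed.

Lemma in_positions_below i p P : In p (positions_below i P) <-> In (i :: p) P.
Proof.
  unfold positions_below. rewrite in_flat_map. split.
  - intros [[|j q] [Hq Hp]]; [destruct Hp|].
    destruct (Nat.eqb_spec j i); [|destruct Hp]. destruct Hp as [<-|[]]; subst; auto.
  - intros H. exists (i :: p). rewrite Nat.eqb_refl. simpl; auto.
Qed.

Lemma NoDup_positions_below i P : NoDup P -> NoDup (positions_below i P).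
Proof.
  induction 1; [constructor|].
  destruct x as [|j p]; [exact IHNoDup|]. rewrite positions_below_cons.
  destruct (Nat.eqb_spec j i); subst; auto.
  constructor; auto. rewrite in_positions_below; auto.
Qed.

Lemma parallel_positions_below i P : parallel_set P -> parallel_set (positions_below i P).
Proof.
  intros [HND Hpar]. split; [apply NoDup_positions_below; auto|].
  intros p q Hp Hq Hpq [r' ->]. apply in_positions_below in Hp, Hq.
  apply (Hpar _ _ Hp Hq); [intros E; injection E; auto | exists r'; auto].
Qed.

Lemma in_tag_positions k Ps q :
  In q (tag_positions k Ps) <-> exists i p, q = (k + i) :: p /\ In p (nth i Ps []).
Proof.
  revert k; induction Ps as [|L Ps IH]; intros k; unfold tag_positions in *; simpl.
  - split; [intros []|]. intros [i [p [_ H]]]. destruct i; destruct H.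
  - rewrite in_app_iff, IH, in_map_iff. split.
    + intros [[p [<- Hp]]|[i [p [-> Hp]]]].
      * exists 0, p. rewrite Nat.add_0_r. auto.
      * exists (S i), p. split; auto. f_equal; lia.
    + intros [i [p [-> Hp]]]. destruct i.
      * left. exists p. rewrite Nat.add_0_r. auto.
      * right. exists i, p. split; auto. f_equal; lia.
Qed.

Lemma positions_below_tag k Ps j :
  positions_below j (tag_positions k Ps) = if k <=? j then nth (j - k) Ps [] else [].
Proof.
  assert (Hmap : forall k i L, positions_below i (map (cons k) L) = if k =? i then L else []).
  { intros k0 i L. induction L; simpl; [destruct (k0 =? i); auto|].
    change (positions_below i ((k0 :: a) :: map (cons k0) L) = if k0 =? i then a :: L else []).
    rewrite positions_below_cons, IHL. destruct (k0 =? i); auto. }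
  revert k; induction Ps as [|L Ps IH]; intros k; unfold tag_positions in *; simpl.
  - destruct (k <=? j); auto. destruct (j - k); auto.
  - assert (Happ : forall A B,
               positions_below j (A ++ B) = positions_below j A ++ positions_below j B)
      by (intros; apply flat_map_app).
    rewrite Happ, Hmap, IH. destruct (Nat.eqb_spec k j); subst.
    + rewrite Nat.leb_refl, Nat.sub_diag.
      destruct (Nat.leb_spec (S j) j); [lia|]. apply app_nil_r.
    + destruct (Nat.leb_spec (S k) j), (Nat.leb_spec k j); try lia; simpl; auto.
      replace (j - k) with (S (j - S k)) by lia. reflexivity.
Qed.

Lemma parallel_tag_positions (Ps : list (list pos)) :
  (forall i, parallel_set (nth i Ps [])) -> parallel_set (tag_positions 0 Ps).
Proof.
  intros H. split.
  - generalize 0. induction Ps as [|L Ps IH]; intros k; unfold tag_positions in *; simpl;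
      [constructor|]. apply NoDup_app.
    + apply NoDup_map_NoDup_ForallPairs; [intros x y _ _ E; injection E; auto | apply (H 0)].
    + apply IH. intros i; apply (H (S i)).
    + intros q Hq1 Hq2. apply in_map_iff in Hq1 as [p [<- _]].
      apply (in_tag_positions (S k)) in Hq2 as [i [p' [E _]]]. injection E; lia.
  - intros q1 q2 H1 H2 Hne [r' ->].
    apply in_tag_positions in H1 as [i [p [-> Hp]]].
    apply in_tag_positions in H2 as [i' [p' [E Hp']]].
    injection E as <- <-. destruct (H i) as [_ Hpar].
    apply (Hpar p (p ++ r')); auto;
      [intros E'; apply Hne; simpl; f_equal; exact E'|exists r'; auto].
Qed.

Lemma replace_Fun (f : F) ts i p u s : nth_error ts i = Some s ->
  replace (Fun f ts) (i :: p) u =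
  Fun f (mapi 0 (fun j x => if j =? i then replace x p u else x) ts).
Proof.
  intros H. simpl. rewrite H. f_equal. symmetry.
  exact (mapi_upd 0 i (fun x => replace x p u) ts s H).
Qed.

Lemma replace_all_Fun (f : F) ss P g :
  (forall q, In q P -> q <> []) ->
  replace_all (Fun f ss) P g =
  Fun f (mapi 0 (fun i s => replace_all s (positions_below i P) (fun p => g (i :: p))) ss).
Proof.
  induction P as [|[|i p] P IH]; intros Hne.
  - simpl. f_equal. symmetry. apply mapi_id. auto.
  - exfalso; apply (Hne []); simpl; auto.
  - change (replace_all (Fun f ss) ((i :: p) :: P) g)
      with (replace (replace_all (Fun f ss) P g) (i :: p) (g (i :: p))).
    rewrite IH by (intros; apply Hne; simpl; auto).
    destruct (nth_error ss i) as [s|] eqn:E.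
    + erewrite replace_Fun by (rewrite nth_error_mapi, E; reflexivity).
      f_equal. rewrite mapi_mapi. apply mapi_ext_lt. intros j x _.
      rewrite positions_below_cons. destruct (Nat.eqb_spec j i); subst.
      * rewrite Nat.eqb_refl. reflexivity.
      * destruct (Nat.eqb_spec i j); [lia|]. reflexivity.
    + simpl. rewrite nth_error_mapi, E. simpl. f_equal. apply mapi_ext_lt.
      intros j x Hj. apply nth_error_None in E.
      destruct (Nat.eqb_spec i j); [lia|]. reflexivity.
Qed.

Lemma replace_all_ext (s : term F) P g h :
  (forall p, In p P -> g p = h p) -> replace_all s P g = replace_all s P h.
Proof.
  induction P; intros H; simpl; auto.
  rewrite IHP by (intros; apply H; simpl; auto). rewrite H by (simpl; auto). auto.
Qed.

Lemma subterm_subst (d : nat -> term F) s p u :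
  subterm s p = Some u -> subterm (subst d s) p = Some (subst d u).
Proof.
  revert s; induction p as [|i p IH]; intros s H; simpl in *; [injection H as <-; auto|].
  destruct s as [x|f ts]; try discriminate. simpl. rewrite nth_error_map.
  destruct (nth_error ts i); try discriminate. simpl. auto.
Qed.

Lemma vars_subterm (t : term F) p u : subterm t p = Some u -> incl (vars u) (vars t).
Proof.
  revert t; induction p as [|i p IH]; intros t H; simpl in H; [injection H as <-; apply incl_refl|].
  destruct t as [x|f ts]; try discriminate.
  destruct (nth_error ts i) as [ti|] eqn:E; try discriminate.
  intros y Hy. apply IH in H. apply H in Hy. simpl. apply in_flat_map.
  exists ti. split; auto. eapply nth_error_In; eauto.
Qed.

Lemma replace_subst (d : nat -> term F) s p u :
  subterm s p <> None -> subst d (replace s p u) = replace (subst d s) p (subst d u).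
Proof.
  revert s; induction p as [|i p IH]; intros s H; simpl in *; auto.
  destruct s as [x|f ts]; [congruence|]. simpl. rewrite nth_error_map.
  destruct (nth_error ts i) as [si|] eqn:E; [|congruence]. simpl.
  rewrite map_app. simpl. rewrite IH by auto. rewrite firstn_map.
  destruct ts; simpl; auto. rewrite skipn_map. auto.
Qed.

Lemma subterm_replace_par (s : term F) p q u :
  subterm s p <> None -> ~ prefix q p -> subterm (replace s q u) p <> None.
Proof.
  revert s p; induction q as [|j q IH]; intros s p Hs Hq; [exfalso; apply Hq; exists p; auto|].
  destruct s as [x|f ts]; simpl; auto.
  destruct (nth_error ts j) as [sj|] eqn:Ej; auto.
  destruct p as [|i p]; simpl; [discriminate|].
  simpl in Hs. destruct (Nat.eq_dec i j).
  - subst. rewrite (nth_error_upd_same _ _ _ _ Ej). rewrite Ej in Hs.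
    apply IH; auto. intros [r' E]. apply Hq. exists r'. subst; auto.
  - rewrite (nth_error_upd_other _ _ _ _ _ Ej n). auto.
Qed.

Lemma subst_replace_all (d : nat -> term F) s P g :
  parallel_set P -> (forall p, In p P -> subterm s p <> None) ->
  subst d (replace_all s P g) = replace_all (subst d s) P (fun p => subst d (g p)).
Proof.
  induction P as [|p P IH]; intros [Hnd Hpar] Hs; simpl; auto.
  inversion Hnd as [|p0 P0 Hnin Hnd']; subst.
  assert (Hkeep : forall P', incl P' P -> subterm (replace_all s P' g) p <> None).
  { induction P' as [|q P' IH']; intros Hincl; simpl; [apply Hs; simpl; auto|].
    apply subterm_replace_par; [apply IH'; intros ? ?; apply Hincl; simpl; auto|].
    apply Hpar; simpl; auto; [right; apply Hincl; simpl; auto|].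
    intros ->. apply Hnin, Hincl. simpl; auto. }
  rewrite replace_subst by (apply Hkeep, incl_refl). f_equal.
  apply IH; [split; auto|]; intros; [apply Hpar|apply Hs]; simpl; auto.
Qed.

(** * Parallel steps, inductively *)

Inductive par (R : trs F) : term F -> term F -> Prop :=
| par_refl t : par R t t
| par_root l r mu : R (l, r) -> par R (subst mu l) (subst mu r)
| par_fun f ss ts : Forall2 (par R) ss ts -> par R (Fun f ss) (Fun f ts).

Fixpoint par_ind_nested (R : trs F) (Q : term F -> term F -> Prop)
  (H1 : forall t, Q t t)
  (H2 : forall l r mu, R (l, r) -> Q (subst mu l) (subst mu r))
  (H3 : forall f ss ts, Forall2 (fun s t => par R s t /\ Q s t) ss ts -> Q (Fun f ss) (Fun f ts))
  s t (H : par R s t) {struct H} : Q s t :=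
  match H with
  | par_refl _ t => H1 t
  | par_root _ l r mu Hr => H2 l r mu Hr
  | par_fun _ f ss ts HF => H3 f ss ts
      ((fix go ss ts (HF : Forall2 (par R) ss ts) :
           Forall2 (fun s t => par R s t /\ Q s t) ss ts :=
          match HF with
          | Forall2_nil _ => Forall2_nil _
          | Forall2_cons _ _ Hh Ht =>
              Forall2_cons _ _ (conj Hh (par_ind_nested R Q H1 H2 H3 _ _ Hh)) (go _ _ Ht)
          end) ss ts HF)
  end.

Definition par_step_at (R : trs F) (P : list pos) (s t : term F) : Prop :=
  parallel_set P /\
  (forall p, In p P -> exists l r mu, R (l, r) /\
      subterm s p = Some (subst mu l) /\ subterm t p = Some (subst mu r)) /\
  t = replace_all s P (fun p => match subterm t p with Some u => u | None => Var 0 end).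

Lemma par_step_at_below R P f ss ts i si :
  (forall q, In q P -> q <> []) -> par_step_at R P (Fun f ss) (Fun f ts) ->
  nth_error ss i = Some si -> exists ti, nth_error ts i = Some ti /\
  par_step_at R (positions_below i P) si ti.
Proof.
  intros Hne [HP [Hred Ht]] Hsi.
  set (g := fun p => match subterm (Fun f ts) p with Some u => u | None => Var 0 end) in Ht.
  pose proof Ht as Ht'. rewrite replace_all_Fun in Ht' by auto. injection Ht' as Hts.
  remember (replace_all si (positions_below i P) (fun p => g (i :: p))) as ti eqn:Eti.
  assert (Hti : nth_error ts i = Some ti) by (rewrite Hts, nth_error_mapi, Hsi, Eti; reflexivity).
  exists ti. split; [exact Hti|split; [apply parallel_positions_below; auto|split]].
  - intros p Hp. apply in_positions_below in Hp.
    destruct (Hred _ Hp) as [l [r [mu [HR [Hs Ht2]]]]]. simpl in Hs, Ht2.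
    rewrite Hsi in Hs. rewrite Hti in Ht2. exists l, r, mu; auto.
  - rewrite Eti at 1. apply replace_all_ext. intros p _. unfold g. simpl. rewrite Hti. reflexivity.
Qed.

Lemma par_step_par R s t : par_step R s t -> par R s t.
Proof.
  revert t; induction s as [x|f ss IH] using term_ind_nested; intros t [P HP].
  - destruct HP as [_ [Hred Ht]]. destruct P as [|q P]; [simpl in Ht; subst; constructor|].
    destruct (Hred q (or_introl eq_refl)) as [l [r [mu [HR [Hs Ht']]]]].
    destruct q; simpl in Hs; [|discriminate].
    injection Hs as ->. injection Ht' as ->. constructor; auto.
  - destruct (in_dec (list_eq_dec Nat.eq_dec) [] P) as [H0|H0].
    { destruct HP as [_ [Hred _]]. destruct (Hred [] H0) as [l [r [mu [HR [Hs Ht']]]]].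
      injection Hs as ->; injection Ht' as ->. constructor; auto. }
    assert (Hne : forall q, In q P -> q <> []) by (intros q Hq E; subst; auto).
    pose proof HP as [_ [_ Ht]]. rewrite replace_all_Fun in Ht by auto.
    remember (mapi _ _ ss) as ts eqn:Ets in Ht. subst t.
    assert (Hlen : length ss = length ts) by (rewrite Ets, length_mapi; auto).
    constructor. apply Forall2_from_nth; auto. intros i si ti Hsi Hti.
    destruct (par_step_at_below _ _ _ _ _ _ _ Hne HP Hsi) as [ti' [Hti' Hstep]].
    rewrite Hti in Hti'. injection Hti' as <-.
    rewrite Forall_forall in IH. apply (IH si (nth_error_In _ _ Hsi)).
    exists (positions_below i P); exact Hstep.
Qed.

Lemma par_step_at_args R f ss ts Ps :
  Forall2 (fun _ _ => True) ss ts ->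
  (forall i si ti, nth_error ss i = Some si -> nth_error ts i = Some ti ->
     par_step_at R (nth i Ps []) si ti) ->
  (forall i, nth_error ss i = None -> nth i Ps [] = []) ->
  par_step_at R (tag_positions 0 Ps) (Fun f ss) (Fun f ts).
Proof.
  intros Hlen HPs HPnil.
  assert (Hin : forall q, In q (tag_positions 0 Ps) -> exists i p si ti, q = i :: p /\
            In p (nth i Ps []) /\ nth_error ss i = Some si /\ nth_error ts i = Some ti).
  { intros q Hq. apply in_tag_positions in Hq as [i [p [-> Hp]]].
    destruct (nth_error ss i) as [si|] eqn:Es; [|rewrite HPnil in Hp by auto; destruct Hp].
    destruct (Forall2_nth _ _ _ _ _ Hlen Es) as [ti [Et _]]. exists i, p, si, ti; auto. }
  split; [|split].
  - apply parallel_tag_positions. intros i. destruct (nth_error ss i) as [si|] eqn:Es.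
    + destruct (Forall2_nth _ _ _ _ _ Hlen Es) as [ti [Et _]]. apply (HPs _ _ _ Es Et).
    + rewrite HPnil by auto. split; [constructor|intros p q []].
  - intros q Hq. destruct (Hin _ Hq) as [i [p [si [ti [-> [Hp [Es Et]]]]]]].
    destruct (HPs _ _ _ Es Et) as [_ [Hr _]]. simpl. rewrite Es, Et. auto.
  - rewrite replace_all_Fun.
    2:{ intros q Hq E. destruct (Hin _ Hq) as [i [p [_ [_ [E' _]]]]]. congruence. }
    f_equal. apply nth_error_ext. intros i. rewrite nth_error_mapi. simpl.
    rewrite positions_below_tag. simpl. rewrite Nat.sub_0_r.
    destruct (nth_error ss i) as [si|] eqn:Es.
    + destruct (Forall2_nth _ _ _ _ _ Hlen Es) as [ti [Et _]]. rewrite Et. simpl.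
      destruct (HPs _ _ _ Es Et) as [_ [_ Ht]]. f_equal. exact Ht.
    + simpl. apply nth_error_None. apply Forall2_length in Hlen.
      apply nth_error_None in Es. lia.
Qed.

Lemma par_par_step R s t : par R s t -> par_step R s t.
Proof.
  revert s t; apply par_ind_nested.
  - intros t. exists [].
    split; [split; [constructor|intros p q []]|split; [intros p []|reflexivity]].
  - intros l r mu HR. exists [[]]. split; [split; [repeat constructor; simpl; tauto|]|split].
    + intros p q [<-|[]] [<-|[]] E; congruence.
    + intros p [<-|[]]. exists l, r, mu. auto.
    + reflexivity.
  - intros f ss ts H.
    assert (HF : Forall2 (fun s t => exists P, par_step_at R P s t) ss ts).
    { eapply Forall2_impl; [|exact H]. intros a b [_ Hab]. exact Hab. }
    apply (Forall2_collect _ []) in HF as [Ps [Hl HPs]].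
    exists (tag_positions 0 (firstn (length ss) Ps)). apply par_step_at_args.
    + eapply Forall2_impl; [|exact H]. auto.
    + intros i si ti Hs Ht. rewrite nth_firstn.
      assert (i < length ss) by (apply nth_error_Some; congruence).
      destruct (Nat.ltb_spec i (length ss)); [|lia]. apply HPs; auto.
    + intros i Hs. apply nth_error_None in Hs. apply nth_overflow.
      rewrite length_firstn. lia.
Qed.

Lemma step_subst (R : trs F) d s t : step R s t -> step R (subst d s) (subst d t).
Proof.
  intros [p [l [r [sg [HR [Hs Ht]]]]]]. exists p, l, r, (fun x => subst d (sg x)).
  split; auto. split.
  - rewrite <- subst_comp. apply subterm_subst; auto.
  - subst t. rewrite replace_subst by congruence. rewrite subst_comp. auto.
Qed.

Lemma step_ctx (R : trs F) f pre post s t :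
  step R s t -> step R (Fun f (pre ++ s :: post)) (Fun f (pre ++ t :: post)).
Proof.
  intros [p [l [r [sg [HR [Hs Ht]]]]]]. exists (length pre :: p), l, r, sg.
  destruct (app_cons_facts pre post s) as [E1 [E2 E3]].
  split; auto. split; [simpl; rewrite E1; auto|]. cbn [replace]. rewrite E1, E2, E3, Ht. auto.
Qed.

Lemma step_root (R : trs F) l r sg : R (l, r) -> step R (subst sg l) (subst sg r).
Proof. intros H. exists [], l, r, sg. auto. Qed.

Lemma steps_subst (R : trs F) d s t : steps R s t -> steps R (subst d s) (subst d t).
Proof.
  induction 1; [apply rt_step, step_subst; auto | apply rt_refl | eapply rt_trans; eauto].
Qed.

Lemma steps_ctx (R : trs F) f pre post s t :
  steps R s t -> steps R (Fun f (pre ++ s :: post)) (Fun f (pre ++ t :: post)).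
Proof.
  induction 1; [apply rt_step, step_ctx; auto | apply rt_refl | eapply rt_trans; eauto].
Qed.

Lemma conv_subst (R : trs F) d s t : conv R s t -> conv R (subst d s) (subst d t).
Proof.
  induction 1; [apply rst_step, step_subst; auto | apply rst_refl | apply rst_sym; auto
               | eapply rst_trans; eauto].
Qed.

Lemma conv_ctx (R : trs F) f pre post s t :
  conv R s t -> conv R (Fun f (pre ++ s :: post)) (Fun f (pre ++ t :: post)).
Proof.
  induction 1; [apply rst_step, step_ctx; auto | apply rst_refl | apply rst_sym; auto
               | eapply rst_trans; eauto].
Qed.

Lemma conv_args (R : trs F) f vs ws :
  Forall2 (conv R) vs ws -> conv R (Fun f vs) (Fun f ws).
Proof.
  intros H. cut (forall pre, conv R (Fun f (pre ++ vs)) (Fun f (pre ++ ws)));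
    [intros H'; apply (H' [])|].
  induction H; intros pre; [apply rst_refl|].
  eapply rst_trans; [apply (conv_ctx R f pre l x y); auto|].
  specialize (IHForall2 (pre ++ [y])). rewrite <- !app_assoc in IHForall2. exact IHForall2.
Qed.

Lemma joinable_subst (R : trs F) d s t : joinable R s t -> joinable R (subst d s) (subst d t).
Proof. intros [v [H1 H2]]. exists (subst d v). split; apply steps_subst; auto. Qed.

Lemma joinable_ctx (R : trs F) f pre post s t :
  joinable R s t -> joinable R (Fun f (pre ++ s :: post)) (Fun f (pre ++ t :: post)).
Proof. intros [v [H1 H2]]. exists (Fun f (pre ++ v :: post)). split; apply steps_ctx; auto. Qed.

Lemma joinable_sym (R : trs F) s t : joinable R s t -> joinable R t s.
Proof. intros [v [H1 H2]]. exists v; auto. Qed.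

Lemma par_subst_cong (R : trs F) a b t :
  (forall x, par R (a x) (b x)) -> par R (subst a t) (subst b t).
Proof.
  intros H. induction t using term_ind_nested; simpl; auto.
  constructor. eapply Forall2_map_same; eauto.
Qed.

(** * Unification: a unifiable system has a most general unifier *)

Fixpoint tsize (t : term F) : nat :=
  match t with Var _ => 1 | Fun _ ts => S (list_sum (map tsize ts)) end.

Lemma tsize_pos (t : term F) : 1 <= tsize t.
Proof. destruct t; simpl; lia. Qed.

(* A variable occurring in a non-variable term is strictly smaller after
   instantiation: the basis of the occurs check. *)
Lemma tsize_subst_ge (th : nat -> term F) t x :
  In x (vars t) ->
  tsize (th x) + (match t with Var _ => 0 | Fun _ _ => 1 end) <= tsize (subst th t).
Proof.
  induction t as [y|f ts IH] using term_ind_nested; simpl; intros H.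
  - destruct H as [<-|[]]. lia.
  - induction IH; simpl in *; [destruct H|].
    apply in_app_or in H as [H|H].
    + specialize (H0 H). destruct x0; simpl in *; lia.
    + specialize (IHIH H). lia.
Qed.

Definition eq_system := list (term F * term F).

Definition eq_vars (E : eq_system) : list nat :=
  flat_map (fun e => vars (fst e) ++ vars (snd e)) E.
Definition eq_size (E : eq_system) : nat :=
  list_sum (map (fun e => tsize (fst e) + tsize (snd e)) E).
Definition num_vars (E : eq_system) : nat := length (nodup Nat.eq_dec (eq_vars E)).

Lemma num_vars_le (E1 E2 : eq_system) :
  incl (eq_vars E2) (eq_vars E1) -> num_vars E2 <= num_vars E1.
Proof.
  intros H. apply NoDup_incl_length; [apply NoDup_nodup|].
  intros y Hy. apply nodup_In in Hy. apply nodup_In. auto.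
Qed.

Lemma num_vars_lt (E1 E2 : eq_system) x :
  (forall y, In y (eq_vars E2) -> In y (eq_vars E1) /\ y <> x) -> In x (eq_vars E1) ->
  num_vars E2 < num_vars E1.
Proof.
  intros H Hx. unfold num_vars.
  change (length (x :: nodup Nat.eq_dec (eq_vars E2)) <= length (nodup Nat.eq_dec (eq_vars E1))).
  apply NoDup_incl_length.
  - constructor; [|apply NoDup_nodup]. rewrite nodup_In. intros Hy. apply H in Hy. tauto.
  - intros y [<-|Hy]; apply nodup_In; auto. apply nodup_In in Hy. apply H; auto.
Qed.

Lemma eq_vars_app (E1 E2 : eq_system) : eq_vars (E1 ++ E2) = eq_vars E1 ++ eq_vars E2.
Proof. apply flat_map_app. Qed.

Lemma eq_size_app (E1 E2 : eq_system) : eq_size (E1 ++ E2) = eq_size E1 + eq_size E2.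
Proof. unfold eq_size. rewrite map_app. apply list_sum_app. Qed.

Lemma unifier_cons (th : nat -> term F) a b E :
  unifier th ((a, b) :: E) <-> subst th a = subst th b /\ unifier th E.
Proof.
  unfold unifier; simpl. split.
  - intros H. split; [apply H; auto|]. intros; apply H; auto.
  - intros [H1 H2] a' b' [E'|H]; auto. injection E' as <- <-; auto.
Qed.

Lemma unifier_combine (th : nat -> term F) as_ bs E :
  length as_ = length bs ->
  (unifier th (combine as_ bs ++ E) <-> map (subst th) as_ = map (subst th) bs /\ unifier th E).
Proof.
  revert bs; induction as_ as [|a as_ IH]; intros [|b bs] Hl; simpl in *; try discriminate.
  - unfold unifier. simpl. tauto.
  - injection Hl as Hl. rewrite unifier_cons, IH by auto. split.
    + intros [H1 [H2 H3]]. rewrite H1, H2. auto.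
    + intros [H1 H3]. injection H1 as H1 H2. auto.
Qed.

Lemma eq_vars_combine (as_ bs : list (term F)) y :
  In y (eq_vars (combine as_ bs)) -> In y (flat_map (@vars F) as_) \/ In y (flat_map (@vars F) bs).
Proof.
  revert bs; induction as_ as [|a as_ IH]; intros [|b bs]; simpl; try tauto.
  intros H. apply in_app_or in H as [H|H]; [apply in_app_or in H as [H|H]|].
  - left; apply in_or_app; auto.
  - right; apply in_or_app; auto.
  - destruct (IH bs H); [left|right]; apply in_or_app; auto.
Qed.

Lemma eq_size_combine (as_ bs : list (term F)) :
  eq_size (combine as_ bs) <= list_sum (map tsize as_) + list_sum (map tsize bs).
Proof.
  unfold eq_size. revert bs; induction as_ as [|a as_ IH]; intros [|b bs]; simpl; try lia.
  specialize (IH bs). lia.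
Qed.

Definition subst_system (rho : nat -> term F) (E : eq_system) : eq_system :=
  map (fun e => (subst rho (fst e), subst rho (snd e))) E.

Lemma unifier_subst_system (th rho : nat -> term F) E :
  unifier th (subst_system rho E) <-> unifier (fun y => subst th (rho y)) E.
Proof.
  unfold unifier, subst_system. split.
  - intros H a b Hab. rewrite <- !subst_comp. apply H. apply in_map_iff. exists (a, b); auto.
  - intros H a b Hab. apply in_map_iff in Hab as [[a' b'] [E' Hin]]. injection E' as <- <-.
    simpl. rewrite !subst_comp. auto.
Qed.

Lemma mgu_equiv (E1 E2 : eq_system) sg :
  (forall th, unifier th E1 <-> unifier th E2) -> mgu sg E1 -> mgu sg E2.
Proof. intros H [H1 H2]. split; [apply H; auto|]. intros th Hth. apply H2, H; auto. Qed.

Definition bind (x : nat) (b : term F) : nat -> term F :=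
  fun y => if y =? x then b else Var y.

Lemma occurs_check (th : nat -> term F) x b :
  th x = subst th b -> b <> Var x -> ~ In x (vars b).
Proof.
  intros Hxb Hb Hx. destruct b as [y|f ts].
  - simpl in Hx. destruct Hx as [<-|[]]; auto.
  - pose proof (tsize_subst_ge th (Fun f ts) x Hx). rewrite <- Hxb in H. lia.
Qed.

Lemma subst_bind_unifier (th : nat -> term F) x b t :
  th x = subst th b -> subst th (subst (bind x b) t) = subst th t.
Proof.
  intros Hxb. rewrite subst_comp. apply subst_ext_vars. intros y _. unfold bind.
  destruct (Nat.eqb_spec y x); subst; simpl; auto.
Qed.

Lemma num_vars_bind x (b : term F) E :
  ~ In x (vars b) -> num_vars (subst_system (bind x b) E) < num_vars ((Var x, b) :: E).
Proof.
  intros Hxn. apply num_vars_lt with x; [|simpl; auto].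
  assert (Hsub : forall t y, In y (vars (subst (bind x b) t)) ->
                   (In y (vars t) \/ In y (vars b)) /\ y <> x).
  { intros t y Ht. apply vars_subst in Ht as [z [Hz Hy']]. unfold bind in Hy'.
    destruct (Nat.eqb_spec z x); subst; [split; auto; intros ->; auto|].
    simpl in Hy'. destruct Hy' as [<-|[]]. auto. }
  intros y Hy. unfold eq_vars, subst_system in Hy.
  rewrite flat_map_concat_map, map_map, <- flat_map_concat_map in Hy.
  apply in_flat_map in Hy as [[a' b'] [Hin Hy]]. simpl in Hy.
  assert (Hold : (In y (vars a') \/ In y (vars b') \/ In y (vars b)) /\ y <> x)
    by (apply in_app_or in Hy as [Hy|Hy]; apply Hsub in Hy; tauto).
  destruct Hold as [Hold Hyx]. split; auto.
  change (In y ((vars (@Var F x) ++ vars b) ++ eq_vars E)). apply in_or_app.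
  destruct Hold as [Hy'|[Hy'|Hy']]; [right|right|left; apply in_or_app; auto];
    apply in_flat_map; exists (a', b'); split; auto; apply in_or_app; auto.
Qed.

Lemma eliminate_var x (b : term F) E th :
  (forall E' : eq_system, num_vars E' < num_vars ((Var x, b) :: E) ->
     (exists th, unifier th E') -> exists sg, mgu sg E') ->
  unifier th ((Var x, b) :: E) -> b <> Var x -> exists sg, mgu sg ((Var x, b) :: E).
Proof.
  intros IH Hth Hb. apply unifier_cons in Hth as [Hxb HE].
  pose proof (occurs_check th x b Hxb Hb) as Hxn.
  destruct (IH (subst_system (bind x b) E)) as [sg [Hu Hmg]].
  { apply num_vars_bind; auto. }
  { exists th. apply unifier_subst_system. intros a' b' H.
    rewrite <- !subst_comp, !subst_bind_unifier by auto. auto. }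
  assert (Hbb : subst (bind x b) b = b).
  { transitivity (subst (fun y => Var y) b); [|apply subst_Var].
    apply subst_ext_vars. intros y Hy. unfold bind.
    destruct (Nat.eqb_spec y x); subst; auto. contradiction. }
  exists (fun y => subst sg (bind x b y)). split.
  - apply unifier_cons. split.
    + simpl. unfold bind at 1. rewrite Nat.eqb_refl, <- subst_comp, Hbb. auto.
    + apply unifier_subst_system. auto.
  - intros th' Hth'. apply unifier_cons in Hth' as [Hxb' HE'].
    destruct (Hmg th') as [d Hd].
    { apply unifier_subst_system. intros a' b' H.
      rewrite <- !subst_comp, !subst_bind_unifier by auto. auto. }
    exists d. intros y. unfold bind. destruct (Nat.eqb_spec y x); [|simpl; auto].
    subst. simpl in Hxb'. rewrite Hxb', subst_comp. apply subst_ext_vars. auto.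
Qed.

Lemma term_eq_var (b : term F) x : {b = Var x} + {b <> Var x}.
Proof.
  destruct b as [y|f ts]; [destruct (Nat.eq_dec y x); [left; subst; auto|right; congruence]|].
  right; discriminate.
Defined.

(* Termination of the unification algorithm, by the number of variables and
   then the size of the system. *)
Lemma unifiable_has_mgu_aux : forall n sz (E : eq_system),
  num_vars E <= n -> eq_size E <= sz -> (exists th, unifier th E) -> exists sg, mgu sg E.
Proof.
  intros n. induction n as [n IHn] using lt_wf_ind. intros sz.
  induction sz as [|sz IHsz]; intros E Hn Hs [th Hth]; (destruct E as [|[a b] E]).
  1,3: exists (fun x => Var x); split; [intros a b []|]; intros th' _; exists th'; auto.
  - unfold eq_size in Hs. simpl in Hs. pose proof (tsize_pos a). lia.
  - assert (Hs' : tsize a + tsize b + eq_size E <= S sz) by (unfold eq_size in *; simpl in Hs; lia).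
    assert (IHvar : forall E', num_vars E' < num_vars ((a, b) :: E) ->
                      (exists th, unifier th E') -> exists sg, mgu sg E')
      by (intros E' HE' Hu; apply (IHn (num_vars E')) with (sz := eq_size E'); auto; lia).
    destruct a as [x|f as_]; [destruct (term_eq_var b x) as [->|Hb]|destruct b as [y|g bs]].
    +
      destruct (IHsz E) as [sg Hsg].
      { eapply Nat.le_trans; [|exact Hn]. apply num_vars_le. intros y Hy.
        change (In y ((vars (@Var F x) ++ vars (@Var F x)) ++ eq_vars E)). apply in_or_app; auto. }
      { simpl in Hs'. lia. }
      { exists th. apply unifier_cons in Hth; tauto. }
      exists sg. eapply mgu_equiv; [|exact Hsg]. intros th'. rewrite unifier_cons. tauto.
    + apply (eliminate_var x b E th); auto.
    +
      destruct (eliminate_var y (Fun f as_) E th) as [sg Hsg].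
      { intros E' Hm. apply IHvar. eapply Nat.lt_le_trans; [exact Hm|]. apply num_vars_le.
        intros z Hz. unfold eq_vars in *. simpl in Hz |- *.
        rewrite !in_app_iff in *. simpl. tauto. }
      { apply unifier_cons. apply unifier_cons in Hth. destruct Hth; auto. }
      { discriminate. }
      exists sg. eapply mgu_equiv; [|exact Hsg]. intros th'. rewrite !unifier_cons. intuition.
    +
      apply unifier_cons in Hth as [Hfg HE]. simpl in Hfg. injection Hfg as <- Hm.
      assert (Hl : length as_ = length bs)
        by (rewrite <- (length_map (subst th) as_), Hm, length_map; auto).
      destruct (IHsz (combine as_ bs ++ E)) as [sg Hsg].
      { eapply Nat.le_trans; [|exact Hn]. apply num_vars_le. intros z Hz.
        rewrite eq_vars_app in Hz. simpl. rewrite !in_app_iff.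
        apply in_app_or in Hz as [Hz|Hz]; [apply eq_vars_combine in Hz|]; tauto. }
      { rewrite eq_size_app. pose proof (eq_size_combine as_ bs). simpl in Hs'. lia. }
      { exists th. apply unifier_combine; auto. }
      exists sg. eapply mgu_equiv; [|exact Hsg]. intros th'.
      rewrite unifier_combine, unifier_cons by auto. simpl.
      split; intros [H1 H2]; (split; [|auto]); [rewrite H1; auto|injection H1; auto].
Qed.

Theorem unifiable_has_mgu (E : eq_system) th : unifier th E -> exists sg, mgu sg E.
Proof. intros H. apply (unifiable_has_mgu_aux (num_vars E) (eq_size E)); eauto. Qed.

(** * Decomposing a parallel step out of an instance of a linear term *)

(* A root step, recorded by the rule used and its matching substitution. *)
Definition redex := (rule F * (nat -> term F))%type.

Definition contractum (rho : pos -> redex) (p : pos) : term F :=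
  subst (snd (rho p)) (snd (fst (rho p))).

(* Root steps at the positions [dpos], inside which the step is described by
   [dredex], and the substitution [dsubst] reached by the steps below variables. *)
Record decomposition := Decomp {
  dpos : list pos;
  dredex : pos -> redex;
  dsubst : nat -> term F }.

(* Placeholders for indices outside the range of a list. *)
Definition trivial_redex : redex := ((Var 0, Var 0), fun z => Var z).
Definition trivial_decomposition : decomposition :=
  Decomp [] (fun _ => trivial_redex) (fun z => Var z).

(* [D] describes the parallel step [subst mu l =>_Rin x]: redexes at parallel
   function positions of [l], the remaining steps inside the substitution. *)
Record decomposes (Rin : trs F) (l : term F) (mu : nat -> term F) (x : term F)
    (D : decomposition) : Prop := {
  dec_parallel : parallel_set (dpos D);
  dec_fun_pos : forall p, In p (dpos D) -> is_fun_pos l p;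
  dec_rule : forall p, In p (dpos D) -> Rin (fst (dredex D p));
  dec_match : forall p, In p (dpos D) -> exists lp, subterm l p = Some lp /\
                subst mu lp = subst (snd (dredex D p)) (fst (fst (dredex D p)));
  dec_subst_par : forall y, par Rin (mu y) (dsubst D y);
  dec_subst_fixed : forall p lp y, In p (dpos D) -> subterm l p = Some lp ->
                      In y (vars lp) -> dsubst D y = mu y;
  dec_result : x = replace_all (subst (dsubst D) l) (dpos D) (contractum (dredex D));
  dec_par : par Rin (replace_all (subst mu l) (dpos D) (contractum (dredex D))) x }.

Lemma decomposes_no_redex Rin l mu mu' :
  (forall y, par Rin (mu y) (mu' y)) ->
  decomposes Rin l mu (subst mu' l) (Decomp [] (fun _ => trivial_redex) mu').
Proof.
  intros Hmu. constructor; simpl; try (intros; contradiction).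
  - split; [constructor|intros p q []].
  - exact Hmu.
  - reflexivity.
  - apply par_subst_cong; auto.
Qed.

Lemma decomposes_root Rin (f : F) ls mu l r nu :
  Rin (l, r) -> subst mu (Fun f ls) = subst nu l ->
  decomposes Rin (Fun f ls) mu (subst nu r) (Decomp [[]] (fun _ => ((l, r), nu)) mu).
Proof.
  intros HR Hm. constructor; simpl.
  - split; [repeat constructor; simpl; tauto|intros p q [<-|[]] [<-|[]]; tauto].
  - intros p [<-|[]]. exists f, ls. reflexivity.
  - intros p [<-|[]]. exact HR.
  - intros p [<-|[]]. exists (Fun f ls). auto.
  - intros; constructor.
  - reflexivity.
  - reflexivity.
  - constructor.
Qed.

Fixpoint arg_index (z : nat) (ls : list (term F)) : option nat :=
  match ls with
  | [] => None
  | l :: ls' => if in_dec Nat.eq_dec z (vars l) then Some 0 else option_map S (arg_index z ls')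
  end.

Lemma arg_index_some z (ls : list (term F)) i :
  arg_index z ls = Some i -> exists li, nth_error ls i = Some li /\ In z (vars li).
Proof.
  revert i; induction ls as [|l ls IH]; intros i H; simpl in H; [discriminate|].
  destruct (in_dec Nat.eq_dec z (vars l)); [injection H as <-; exists l; auto|].
  destruct (arg_index z ls) eqn:E; try discriminate. injection H as <-. simpl. auto.
Qed.

Lemma arg_index_unique z (ls : list (term F)) i li :
  NoDup (flat_map (@vars F) ls) -> nth_error ls i = Some li -> In z (vars li) ->
  arg_index z ls = Some i.
Proof.
  revert i; induction ls as [|l ls IH]; intros i Hnd Hi Hz; destruct i; simpl in *;
    try discriminate.
  - injection Hi as ->. destruct (in_dec Nat.eq_dec z (vars li)); tauto.
  - destruct (in_dec Nat.eq_dec z (vars l)) as [Hzl|Hzl].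
    + exfalso. apply (NoDup_app_disjoint _ _ z Hnd Hzl).
      apply in_flat_map. exists li. split; auto. eapply nth_error_In; eauto.
    + rewrite (IH i); auto. eapply NoDup_app_remove_l; eauto.
Qed.

Section Arguments.
Variables (Rin : trs F) (f : F) (ls xs : list (term F)) (mu : nat -> term F).
Variable Ds : list decomposition.
Hypothesis Hlinear : NoDup (flat_map (@vars F) ls).
Hypothesis Hlen : length ls = length xs.
Hypothesis HlenD : length Ds = length ls.
Hypothesis HDs : forall i li xi, nth_error ls i = Some li -> nth_error xs i = Some xi ->
  decomposes Rin li mu xi (nth i Ds trivial_decomposition).

Let D i := nth i Ds trivial_decomposition.

Definition args_decomposition : decomposition :=
  Decomp (tag_positions 0 (map dpos Ds))
    (fun q => match q with [] => trivial_redex | i :: p => dredex (D i) p end)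
    (fun z => match arg_index z ls with Some i => dsubst (D i) z | None => mu z end).

Lemma arg_decomposes i li : nth_error ls i = Some li ->
  exists xi, nth_error xs i = Some xi /\ decomposes Rin li mu xi (D i).
Proof.
  intros El. destruct (nth_error xs i) as [xi|] eqn:Ex; [exists xi; eauto|].
  apply nth_error_None in Ex. assert (i < length ls) by (apply nth_error_Some; congruence). lia.
Qed.

Lemma args_positions_below i : positions_below i (dpos args_decomposition) = dpos (D i).
Proof.
  simpl. rewrite positions_below_tag. simpl. rewrite Nat.sub_0_r.
  change [] with (dpos trivial_decomposition). apply map_nth.
Qed.

Lemma in_args_positions q : In q (dpos args_decomposition) ->
  exists i p li xi, q = i :: p /\ In p (dpos (D i)) /\
                    nth_error ls i = Some li /\ nth_error xs i = Some xi.
Proof.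
  intros Hq. apply in_tag_positions in Hq as [i [p [-> Hp]]].
  change [] with (dpos trivial_decomposition) in Hp. rewrite map_nth in Hp.
  destruct (nth_error ls i) as [li|] eqn:El.
  - destruct (arg_decomposes i li El) as [xi [Ex _]]. exists i, p, li, xi; auto.
  - apply nth_error_None in El. unfold D in Hp. rewrite nth_overflow in Hp by lia. destruct Hp.
Qed.

(* On the variables of the [i]-th argument the combined substitution is that
   of the [i]-th decomposition (linearity). *)
Lemma args_subst_arg i li z : nth_error ls i = Some li -> In z (vars li) ->
  dsubst args_decomposition z = dsubst (D i) z.
Proof. intros Hli Hz. simpl. rewrite (arg_index_unique z ls i li); auto. Qed.

Lemma args_nonroot q : In q (dpos args_decomposition) -> q <> [].
Proof. intros Hq. destruct (in_args_positions q Hq) as [i [p [_ [_ [-> _]]]]]. discriminate. Qed.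

Lemma decomposes_args : decomposes Rin (Fun f ls) mu (Fun f xs) args_decomposition.
Proof.
  split.
  - apply parallel_tag_positions. intros i. change [] with (dpos trivial_decomposition).
    rewrite map_nth. destruct (nth_error ls i) as [li|] eqn:El.
    + destruct (arg_decomposes i li El) as [xi [_ HD]]. apply HD.
    + apply nth_error_None in El. unfold D. rewrite nth_overflow by lia.
      split; [constructor|intros p q []].
  - intros q Hq. destruct (in_args_positions q Hq) as [i [p [li [xi [-> [Hp [El Ex]]]]]]].
    destruct (dec_fun_pos _ _ _ _ _ (HDs _ _ _ El Ex) p Hp) as [g [gs Hg]].
    exists g, gs. simpl. rewrite El. auto.
  - intros q Hq. destruct (in_args_positions q Hq) as [i [p [li [xi [-> [Hp [El Ex]]]]]]].
    apply (dec_rule _ _ _ _ _ (HDs _ _ _ El Ex) p Hp).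
  - intros q Hq. destruct (in_args_positions q Hq) as [i [p [li [xi [-> [Hp [El Ex]]]]]]].
    simpl. rewrite El. apply (dec_match _ _ _ _ _ (HDs _ _ _ El Ex) p Hp).
  - intros z. simpl. destruct (arg_index z ls) as [i|] eqn:Ef; [|constructor].
    destruct (arg_index_some _ _ _ Ef) as [li [El _]].
    destruct (arg_decomposes i li El) as [xi [_ HD]]. apply HD.
  - intros q lp y Hq Hlp Hy.
    destruct (in_args_positions q Hq) as [i [p [li [xi [-> [Hp [El Ex]]]]]]].
    simpl in Hlp. rewrite El in Hlp.
    rewrite (args_subst_arg i li y El) by (eapply vars_subterm; eauto).
    eapply (dec_subst_fixed _ _ _ _ _ (HDs _ _ _ El Ex)); eauto.
  - change (subst _ (Fun f ls)) with (Fun f (map (subst (dsubst args_decomposition)) ls)).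
    rewrite replace_all_Fun by apply args_nonroot. f_equal. apply nth_error_ext. intros i.
    rewrite nth_error_mapi, nth_error_map. destruct (nth_error ls i) as [li|] eqn:El.
    + destruct (arg_decomposes i li El) as [xi [Ex HD]]. rewrite Ex.
      simpl. f_equal. rewrite (dec_result _ _ _ _ _ HD) at 1.
      rewrite args_positions_below.
      f_equal. apply subst_ext_vars. intros z Hz. symmetry. apply (args_subst_arg i li z El Hz).
    + simpl. apply nth_error_None. apply nth_error_None in El. lia.
  - change (subst mu (Fun f ls)) with (Fun f (map (subst mu) ls)).
    rewrite replace_all_Fun by apply args_nonroot. constructor. apply Forall2_from_nth.
    { rewrite length_mapi, length_map. auto. }
    intros i a b Ha Hb. rewrite nth_error_mapi, nth_error_map in Ha. simpl in Ha.
    destruct (nth_error ls i) as [li|] eqn:El; [|discriminate]. simpl in Ha. injection Ha as <-.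
    rewrite args_positions_below. apply (dec_par _ _ _ _ _ (HDs _ _ _ El Hb)).
Qed.

End Arguments.

Theorem decompose_par_step Rin mu l : NoDup (vars l) -> forall x, par Rin (subst mu l) x ->
  exists D, decomposes Rin l mu x D.
Proof.
  induction l as [y|f ls IH] using term_ind_nested; intros Hnd x H.
  - exists (Decomp [] (fun _ => trivial_redex) (fun z => if z =? y then x else mu z)).
    assert (Hx : x = subst (fun z => if z =? y then x else mu z) (Var y))
      by (simpl; rewrite Nat.eqb_refl; auto).
    rewrite Hx at 1. apply decomposes_no_redex.
    intros z. destruct (Nat.eqb_spec z y); subst; [exact H|constructor].
  - remember (subst mu (Fun f ls)) as s0 eqn:Es.
    destruct H as [t|l' r' nu HR|f0 ss xs HF].
    + subst. eexists. apply decomposes_no_redex. intros; constructor.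
    + eexists. apply decomposes_root; eauto.
    + simpl in Es. injection Es as -> ->. apply Forall2_map_l in HF.
      simpl in Hnd.
      assert (HF' : Forall2 (fun li xi => exists D, decomposes Rin li mu xi D) ls xs).
      { assert (Hnds : Forall (fun l => NoDup (vars l)) ls).
        { clear -Hnd. induction ls; simpl in *; constructor;
            [eapply NoDup_app_remove_r | apply IHls; eapply NoDup_app_remove_l]; eauto. }
        eapply Forall2_impl; [|exact (Forall_Forall2_and _ _ _ _ IH
                                         (Forall_Forall2_and _ _ _ _ Hnds HF))].
        intros a b [IHa [Hna Hab]]. exact (IHa Hna b Hab). }
      apply (Forall2_collect _ trivial_decomposition) in HF' as [Ds [HlD HDs]].
      exists (args_decomposition ls mu Ds).
      apply decomposes_args; auto. eapply Forall2_length; eauto.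
Qed.

(** * Renaming the overlapping rules apart *)

Definition swap_block (N M z : nat) : nat :=
  if z <? N then z + M else if andb (M <=? z) (z <? M + N) then z - M else z.

Lemma swap_block_invol N M z : N <= M -> swap_block N M (swap_block N M z) = z.
Proof.
  intros H. unfold swap_block.
  destruct (Nat.ltb_spec z N).
  - destruct (Nat.ltb_spec (z + M) N); [lia|].
    destruct (Nat.leb_spec M (z + M)), (Nat.ltb_spec (z + M) (M + N)); simpl; lia.
  - destruct (Nat.leb_spec M z), (Nat.ltb_spec z (M + N)); simpl.
    + destruct (Nat.ltb_spec (z - M) N); lia.
    + destruct (Nat.ltb_spec z N); [lia|]. destruct (Nat.leb_spec M z); [|lia].
      destruct (Nat.ltb_spec z (M + N)); simpl; lia.
    + destruct (Nat.ltb_spec z N); [lia|]. destruct (Nat.leb_spec M z); [lia|]. simpl; lia.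
    + destruct (Nat.ltb_spec z N); [lia|]. destruct (Nat.leb_spec M z); [lia|]. simpl; lia.
Qed.

Lemma swap_block_lt N M z : z < N -> swap_block N M z = z + M.
Proof. intros H. unfold swap_block. destruct (Nat.ltb_spec z N); lia. Qed.

Lemma renaming_swap_block N M : N <= M -> renaming (swap_block N M).
Proof. intros H. exists (swap_block N M). split; intros; apply swap_block_invol; auto. Qed.

Lemma subst_swap_block_invol N M (t : term F) : N <= M ->
  subst (fun z => Var (swap_block N M z)) (subst (fun z => Var (swap_block N M z)) t) = t.
Proof.
  intros H. rewrite subst_comp. transitivity (subst (fun z => Var z) t); [|apply subst_Var].
  apply subst_ext_vars. intros z _. simpl. rewrite swap_block_invol; auto.
Qed.

(* The index of a position in the list [P]; it selects the variable block. *)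
Fixpoint index_of (p : pos) (P : list pos) : nat :=
  match P with
  | [] => 0
  | q :: P' => if list_eq_dec Nat.eq_dec p q then 0 else S (index_of p P')
  end.

Lemma nth_index_of p P : In p P -> nth (index_of p P) P [] = p.
Proof.
  induction P as [|q P IH]; simpl; intros H; [destruct H|].
  destruct (list_eq_dec Nat.eq_dec p q); auto. destruct H; [congruence|auto].
Qed.

Lemma in_le_list_max z L : In z L -> z <= list_max L.
Proof.
  intros H. pose proof (proj1 (list_max_le L (list_max L)) (le_n _)) as HF.
  rewrite Forall_forall in HF. auto.
Qed.

Lemma div_block y k N : y < N -> (y + S k * N) / N = S k /\ (y + S k * N) mod N = y.
Proof.
  intros H. assert (N <> 0) by lia. split.
  - rewrite Nat.div_add, Nat.div_small by auto. lia.
  - rewrite Nat.Div0.mod_add. apply Nat.mod_small; auto.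
Qed.

(* The rule [l -> r] overlapped at the positions [P] by the redexes [rho]:
   the rule at the [k]-th position of [P] is renamed into the variable block
   [(k+1) N, (k+2) N), where all variables of all rules are below [N]. *)
Section RenamingApart.
Variables (l r : term F) (P : list pos) (rho : pos -> redex).

Definition var_bound : nat :=
  S (list_max (vars l ++ vars r ++ flat_map (fun p => rule_vars (fst (rho p))) P)).

Definition block_offset (p : pos) : nat := S (index_of p P) * var_bound.

Definition renamed_rule (p : pos) : rule F :=
  (subst (fun z => Var (swap_block var_bound (block_offset p) z)) (fst (fst (rho p))),
   subst (fun z => Var (swap_block var_bound (block_offset p) z)) (snd (fst (rho p)))).

(* [m] on the variables of [l -> r], the matching substitution of each redex
   on the block of its renamed rule. *)
Definition joint_subst (m : nat -> term F) (z : nat) : term F :=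
  if z <? var_bound then m z else snd (rho (nth (z / var_bound - 1) P [])) (z mod var_bound).

Definition critical_equations : eq_system :=
  map (fun p => (fst (renamed_rule p),
                 match subterm l p with Some v => v | None => Var 0 end)) P.

Lemma var_bound_l z : In z (vars l) -> z < var_bound.
Proof. intros Hz. apply Nat.lt_succ_r, in_le_list_max, in_or_app; auto. Qed.

Lemma var_bound_r z : In z (vars r) -> z < var_bound.
Proof. intros Hz. apply Nat.lt_succ_r, in_le_list_max, in_or_app; right; apply in_or_app; auto. Qed.

Lemma var_bound_rule p z : In p P -> In z (rule_vars (fst (rho p))) -> z < var_bound.
Proof.
  intros Hp Hz. apply Nat.lt_succ_r, in_le_list_max, in_or_app; right; apply in_or_app; right.
  apply in_flat_map. eauto.
Qed.

Lemma block_offset_ge p : var_bound <= block_offset p.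
Proof. unfold block_offset. rewrite Nat.mul_succ_l. lia. Qed.

Lemma joint_subst_renamed m p y : In p P -> y < var_bound ->
  joint_subst m (swap_block var_bound (block_offset p) y) = snd (rho p) y.
Proof.
  intros Hp Hy. unfold joint_subst. rewrite swap_block_lt by auto.
  destruct (Nat.ltb_spec (y + block_offset p) var_bound); [pose proof (block_offset_ge p); lia|].
  unfold block_offset. destruct (div_block y (index_of p P) var_bound Hy) as [E1 E2].
  rewrite E1, E2. simpl. rewrite Nat.sub_0_r, nth_index_of; auto.
Qed.

Lemma joint_subst_small m t : (forall z, In z (vars t) -> z < var_bound) ->
  subst (joint_subst m) t = subst m t.
Proof.
  intros Ht. apply subst_ext_vars. intros z Hz. unfold joint_subst.
  destruct (Nat.ltb_spec z var_bound); auto. specialize (Ht z Hz). lia.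
Qed.

Lemma joint_subst_rule m p : In p P ->
  subst (joint_subst m) (fst (renamed_rule p)) = subst (snd (rho p)) (fst (fst (rho p))) /\
  subst (joint_subst m) (snd (renamed_rule p)) = subst (snd (rho p)) (snd (fst (rho p))).
Proof.
  intros Hp. unfold renamed_rule; simpl. rewrite !subst_comp.
  split; apply subst_ext_vars; intros z Hz; simpl; apply joint_subst_renamed; auto;
    apply (var_bound_rule p); auto; apply in_or_app; auto.
Qed.

Lemma renamed_rule_variant p : variant (renamed_rule p) (fst (rho p)).
Proof.
  exists (swap_block var_bound (block_offset p)).
  split; [apply renaming_swap_block, block_offset_ge|split; reflexivity].
Qed.

Lemma vars_renamed_rule p z : In p P -> In z (rule_vars (renamed_rule p)) ->
  exists y, y < var_bound /\ z = y + block_offset p.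
Proof.
  intros Hp Hz. unfold rule_vars, renamed_rule in Hz. simpl in Hz.
  rewrite !vars_ren, <- map_app in Hz. apply in_map_iff in Hz as [y [<- Hy]].
  assert (y < var_bound) by (apply (var_bound_rule p); auto).
  exists y. rewrite swap_block_lt; auto.
Qed.

Lemma renamed_rule_disjoint_lr p : In p P -> var_disjoint (renamed_rule p) (l, r).
Proof.
  intros Hp z Hz1 Hz2. destruct (vars_renamed_rule p z Hp Hz1) as [y [_ ->]].
  pose proof (block_offset_ge p). unfold rule_vars in Hz2. simpl in Hz2.
  apply in_app_or in Hz2 as [Hz2|Hz2]; [apply var_bound_l in Hz2|apply var_bound_r in Hz2]; lia.
Qed.

Lemma renamed_rules_disjoint p q : In p P -> In q P -> p <> q ->
  var_disjoint (renamed_rule p) (renamed_rule q).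
Proof.
  intros Hp Hq Hpq z Hz1 Hz2.
  destruct (vars_renamed_rule p z Hp Hz1) as [y [Hy ->]].
  destruct (vars_renamed_rule q _ Hq Hz2) as [y' [Hy' E]]. unfold block_offset in E.
  assert (index_of p P <> index_of q P).
  { intros Ei. apply Hpq. rewrite <- (nth_index_of p P Hp), <- (nth_index_of q P Hq), Ei. auto. }
  destruct (Nat.lt_total (index_of p P) (index_of q P)) as [Hlt|[Heq|Hlt]]; [|contradiction|].
  - assert (S (S (index_of p P)) * var_bound <= S (index_of q P) * var_bound)
      by (apply Nat.mul_le_mono_r; lia). rewrite !Nat.mul_succ_l in *. lia.
  - assert (S (S (index_of q P)) * var_bound <= S (index_of p P) * var_bound)
      by (apply Nat.mul_le_mono_r; lia). rewrite !Nat.mul_succ_l in *. lia.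
Qed.

Lemma joint_subst_unifier m :
  (forall p lp, In p P -> subterm l p = Some lp ->
     subst m lp = subst (snd (rho p)) (fst (fst (rho p)))) ->
  (forall p, In p P -> exists lp, subterm l p = Some lp) ->
  unifier (joint_subst m) critical_equations.
Proof.
  intros Hm Hpos a b Hab. apply in_map_iff in Hab as [p [E Hp]]. injection E as <- <-.
  destruct (Hpos p Hp) as [lp Hlp]. rewrite Hlp.
  change (subst (joint_subst m) (fst (renamed_rule p)) = subst (joint_subst m) lp).
  rewrite (proj1 (joint_subst_rule m p Hp)).
  rewrite joint_subst_small by (intros z Hz; apply var_bound_l, (vars_subterm l p lp Hlp), Hz).
  symmetry. apply Hm; auto.
Qed.

End RenamingApart.

(** * Overlaps of a parallel step with a root step *)

Lemma variant_refl (rl : rule F) : variant rl rl.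
Proof.
  exists (fun z => z). split; [exists (fun z => z); auto|].
  destruct rl; simpl. rewrite !subst_Var. auto.
Qed.

Lemma unswap_renaming N M (t u : term F) pi : N <= M ->
  subst (fun z => Var (swap_block N M z)) t = subst (fun z => Var (pi z)) u ->
  t = subst (fun z => Var (swap_block N M (pi z))) u.
Proof.
  intros HNM E. rewrite <- (subst_swap_block_invol N M t HNM), E, subst_comp. reflexivity.
Qed.

Lemma variant_root_overlap Rin l r mu x D :
  incl (vars r) (vars l) -> decomposes Rin l mu x D -> dpos D = [[]] ->
  variant (renamed_rule l r (dpos D) (dredex D) []) (l, r) -> x = subst mu r.
Proof.
  intros Hvr HD HP [pi [_ [Hv1 Hv2]]]. simpl in Hv1, Hv2.
  set (N := var_bound l r (dpos D) (dredex D)) in *.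
  set (K := block_offset l r (dpos D) (dredex D) []) in *.
  assert (HNK : N <= K) by apply block_offset_ge.
  apply unswap_renaming in Hv1, Hv2; auto.
  destruct (dec_match _ _ _ _ _ HD [] (ltac:(rewrite HP; simpl; auto))) as [lp [Hlp Hmatch]].
  injection Hlp as <-. rewrite Hv1, subst_comp in Hmatch.
  rewrite (dec_result _ _ _ _ _ HD), HP. simpl. unfold contractum. rewrite Hv2, subst_comp.
  symmetry. apply subst_ext_vars. intros z Hz. apply (subst_eq_vars _ _ _ Hmatch), Hvr, Hz.
Qed.

Section CriticalPeak.
Variables (R Rin : trs F) (l r : term F) (mu : nat -> term F) (x : term F) (D : decomposition).
Hypothesis HR : R (l, r).
Hypothesis Hsub : subtrs Rin R.
Hypothesis HD : decomposes Rin l mu x D.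
Hypothesis Hne : dpos D <> [].
Hypothesis Hproper : ~ (dpos D = [[]] /\ variant (renamed_rule l r (dpos D) (dredex D) []) (l, r)).
Variable sg : nat -> term F.
Hypothesis Hmgu : mgu sg (critical_equations l r (dpos D) (dredex D)).

Let rule_at := renamed_rule l r (dpos D) (dredex D).
Let inst := joint_subst l r (dpos D) (dredex D).

Definition critical_source : term F := subst sg l.
Definition critical_target : term F :=
  replace_all (subst sg l) (dpos D) (fun p => subst sg (snd (rule_at p))).
Definition critical_result : term F := subst sg r.

Lemma critical_peak_is_pc_peak :
  pc_peak R R critical_source critical_target critical_result.
Proof.
  exists l, r, (dpos D), rule_at, sg.
  split; [exists (l, r); split; [exact HR|apply variant_refl]|].
  split; [exact Hne|]. split; [apply (dec_parallel _ _ _ _ _ HD)|].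
  split; [apply (dec_fun_pos _ _ _ _ _ HD)|].
  split; [intros p Hp; exists (fst (dredex D p));
          split; [apply Hsub, (dec_rule _ _ _ _ _ HD p Hp)|apply renamed_rule_variant]|].
  split; [intros p Hp; apply renamed_rule_disjoint_lr; auto|].
  split; [intros p q Hp Hq Hpq; apply renamed_rules_disjoint; auto|].
  split; [exact Hmgu|]. split; [intros HP Hv; apply Hproper; auto|].
  repeat split.
Qed.

Section Instance.
Variables (m d : nat -> term F).
Hypothesis Hfactor : forall z, inst m z = subst d (sg z).

Lemma instance_small t : (forall z, In z (vars t) -> z < var_bound l r (dpos D) (dredex D)) ->
  subst d (subst sg t) = subst m t.
Proof.
  intros Ht. rewrite subst_comp, <- (joint_subst_small l r (dpos D) (dredex D) m t Ht).
  apply subst_ext_vars. intros; symmetry; auto.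
Qed.

Lemma instance_source : subst d critical_source = subst m l.
Proof. apply instance_small, var_bound_l. Qed.

Lemma instance_result : subst d critical_result = subst m r.
Proof. apply instance_small, var_bound_r. Qed.

Lemma instance_target :
  subst d critical_target = replace_all (subst m l) (dpos D) (contractum (dredex D)).
Proof.
  unfold critical_target. rewrite subst_replace_all.
  - fold critical_source. rewrite instance_source. apply replace_all_ext. intros p Hp.
    unfold contractum.
    rewrite subst_comp, <- (proj2 (joint_subst_rule l r (dpos D) (dredex D) m p Hp)).
    apply subst_ext_vars. intros; symmetry; auto.
  - apply (dec_parallel _ _ _ _ _ HD).
  - intros p Hp. destruct (dec_match _ _ _ _ _ HD p Hp) as [lp [Hlp _]].
    rewrite (subterm_subst sg l p lp Hlp). discriminate.
Qed.

End Instance.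
End CriticalPeak.

Theorem overlap_cases R Rin l r mu x :
  R (l, r) -> NoDup (vars l) -> incl (vars r) (vars l) -> subtrs Rin R ->
  par Rin (subst mu l) x ->
  (exists mu', (forall y, par Rin (mu y) (mu' y)) /\ x = subst mu' l)
  \/ x = subst mu r
  \/ (exists sc tc uc (d d' mu' : nat -> term F), pc_peak R R sc tc uc /\
        subst mu l = subst d sc /\ subst mu r = subst d uc /\ par Rin (subst d tc) x /\
        x = subst d' tc /\ subst mu' r = subst d' uc /\ (forall y, par Rin (mu y) (mu' y))).
Proof.
  intros HR Hnd Hvr Hsub Hps.
  destruct (decompose_par_step Rin mu l Hnd x Hps) as [D HD].
  destruct (dpos D) as [|p0 P0] eqn:EP.
  { left. exists (dsubst D). split; [apply (dec_subst_par _ _ _ _ _ HD)|].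
    rewrite (dec_result _ _ _ _ _ HD), EP. reflexivity. }
  assert (Hne : dpos D <> []) by (rewrite EP; discriminate). clear EP. right.
  destruct (classic (dpos D = [[]] /\ variant (renamed_rule l r (dpos D) (dredex D) []) (l, r)))
    as [[HP Hv]|Hproper].
  { left. apply (variant_root_overlap Rin l r mu x D); auto. }
  right.
  set (inst := joint_subst l r (dpos D) (dredex D)).
  assert (Hpos : forall p, In p (dpos D) -> exists lp, subterm l p = Some lp)
    by (intros p Hp; destruct (dec_match _ _ _ _ _ HD p Hp) as [lp [Hlp _]]; eauto).
  assert (Hunif : forall m, (forall p lp, In p (dpos D) -> subterm l p = Some lp ->
                    subst m lp = subst mu lp) ->
                  unifier (inst m) (critical_equations l r (dpos D) (dredex D))).
  { intros m Hm. apply joint_subst_unifier; auto. intros p lp Hp Hlp.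
    destruct (dec_match _ _ _ _ _ HD p Hp) as [lp' [Hlp' Hmatch]].
    replace lp' with lp in Hmatch by congruence. rewrite (Hm p lp Hp Hlp). exact Hmatch. }
  destruct (unifiable_has_mgu _ (inst mu) (Hunif mu (fun _ _ _ _ => eq_refl))) as [sg Hmgu].
  destruct (proj2 Hmgu (inst mu)) as [d Hd]; [apply Hunif; auto|].
  destruct (proj2 Hmgu (inst (dsubst D))) as [d' Hd'].
  { apply Hunif. intros p lp Hp Hlp. apply subst_ext_vars. intros.
    eapply (dec_subst_fixed _ _ _ _ _ HD); eauto. }
  exists (critical_source l sg), (critical_target l r D sg), (critical_result r sg),
    d, d', (dsubst D).
  split; [apply (critical_peak_is_pc_peak R Rin l r mu x D); auto|].
  rewrite (instance_source l r D sg mu d Hd), (instance_result l r D sg mu d Hd).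
  rewrite (instance_target Rin l r mu x D HD sg mu d Hd),
    (instance_target Rin l r mu x D HD sg (dsubst D) d' Hd').
  rewrite (instance_result l r D sg (dsubst D) d' Hd').
  repeat split; [apply (dec_par _ _ _ _ _ HD)|apply (dec_result _ _ _ _ _ HD)|
                 apply (dec_subst_par _ _ _ _ _ HD)].
Qed.

(** * The parallel critical pair lemma *)

Definition peak_closes (R C R1 R2 : trs F) (s t u : term F) : Prop :=
  (exists v w, par R2 t v /\ conv C v w /\ par R1 u w)
  \/ (exists t' u', par R1 t' t /\ step (PCPS R C) s t' /\
                    step (PCPS R C) s u' /\ par R2 u' u /\ joinable R t' u').

Lemma peak_closes_sym R C R1 R2 s t u :
  peak_closes R C R1 R2 s t u -> peak_closes R C R2 R1 s u t.
Proof.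
  intros [[v [w [Hv [Hc Hw]]]]|[t' [u' [Ht [Hs1 [Hs2 [Hu Hj]]]]]]].
  - left. exists w, v. split; [exact Hw|split; [apply rst_sym, Hc|exact Hv]].
  - right. exists u', t'. repeat split; auto. apply joinable_sym; auto.
Qed.

Definition critical_pairs_joinable (R : trs F) : Prop :=
  forall s t u, pc_peak R R s t u -> joinable R t u.

Section Peaks.
Variables (R C : trs F).
Hypothesis Htrs : is_trs R.
Hypothesis Hll : left_linear R.
Hypothesis Hjoin : critical_pairs_joinable R.

(* A root step against a parallel step: by [overlap_cases], either the steps
   commute, or they form an instance of a critical peak, which is
   C-convertible or yields two PCPS(R, C)-steps. *)
Lemma root_peak_closes R1 R2 l r mu u :
  subtrs R1 R -> subtrs R2 R -> R1 (l, r) -> par R2 (subst mu l) u ->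
  peak_closes R C R1 R2 (subst mu l) (subst mu r) u.
Proof.
  intros HR1 HR2 Hlr Hps. pose proof (HR1 _ Hlr) as HR.
  destruct (overlap_cases R R2 l r mu u HR (Hll _ _ HR) (proj2 (Htrs _ _ HR)) HR2 Hps)
    as [[mu' [Hm ->]]|[->|[sc [tc [uc [d [d' [mu' [Hpk [Hs [Hr [Hd [Hd' [Hr' Hm]]]]]]]]]]]]]].
  - left. exists (subst mu' r), (subst mu' r).
    split; [apply par_subst_cong; auto|split; [apply rst_refl|apply par_root; auto]].
  - left. exists (subst mu r), (subst mu r).
    split; [apply par_refl|split; [apply rst_refl|apply par_refl]].
  - destruct (classic (conv C tc uc)) as [Hc|Hc].
    + left. exists (subst mu' r), u. split; [apply par_subst_cong; auto|split; [|apply par_refl]].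
      rewrite Hr', Hd'. apply conv_subst, rst_sym; auto.
    + assert (HP : forall v, (sc, v) = (sc, tc) \/ (sc, v) = (sc, uc) -> PCPS R C (sc, v))
        by (intros v Hv; exists sc, tc, uc; auto).
      right. exists (subst mu r), (subst d tc). split; [apply par_refl|].
      split; [rewrite Hs, Hr; apply step_root, HP; auto|].
      split; [rewrite Hs; apply step_root, HP; auto|].
      split; [auto|]. rewrite Hr. apply joinable_sym, joinable_subst. eapply Hjoin; eauto.
Qed.

(* Peaks below a function symbol: either all argument peaks close by
   alternative (i), or the first one that does not gives alternative (ii). *)
Lemma argument_peaks_close R1 R2 ss : forall ts us,
  Forall (fun s => forall t u, par R1 s t -> par R2 s u -> peak_closes R C R1 R2 s t u) ss ->
  Forall2 (par R1) ss ts -> Forall2 (par R2) ss us ->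
  (exists vs ws, Forall2 (par R2) ts vs /\ Forall2 (conv C) vs ws /\ Forall2 (par R1) us ws)
  \/ (exists pre post si ti ui, ss = pre ++ si :: post /\ Forall2 (par R1) (pre ++ ti :: post) ts /\
        step (PCPS R C) si ti /\ step (PCPS R C) si ui /\ Forall2 (par R2) (pre ++ ui :: post) us /\
        joinable R ti ui).
Proof.
  induction ss as [|s ss IH]; intros ts us HI H1 H2.
  - inversion H1; inversion H2; subst. left. exists [], []. auto.
  - inversion H1 as [|a b ts0 ts' Hst Hts]; inversion H2 as [|a' b' us0 us' Hsu Hus]; subst.
    inversion HI as [|a0 l0 Hs HI']; subst.
    destruct (Hs _ _ Hst Hsu) as [[v [w [Hv [Hc Hw]]]]|[t' [u' [Ht' [Hst' [Hsu' [Hu' Hj]]]]]]].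
    + destruct (IH ts' us' HI' Hts Hus)
        as [[vs [ws [Hvs [Hcs Hws]]]]|[pre [post [si [ti [ui [E [Ht [Hti [Hui [Hu Hj]]]]]]]]]]].
      * left. exists (v :: vs), (w :: ws). repeat split; constructor; auto.
      * right. exists (s :: pre), post, si, ti, ui. subst. repeat split; auto; constructor; auto.
    + right. exists [], ss, s, t', u'. repeat split; auto; constructor; auto.
Qed.

Lemma fun_peak_closes R1 R2 f ss ts us :
  Forall (fun s => forall t u, par R1 s t -> par R2 s u -> peak_closes R C R1 R2 s t u) ss ->
  Forall2 (par R1) ss ts -> Forall2 (par R2) ss us ->
  peak_closes R C R1 R2 (Fun f ss) (Fun f ts) (Fun f us).
Proof.
  intros IH HF HG.
  destruct (argument_peaks_close R1 R2 ss ts us IH HF HG)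
    as [[vs [ws [Hvs [Hcs Hws]]]]|[pre [post [si [ti [ui [-> [Ht [Hti [Hui [Hu Hj]]]]]]]]]]].
  - left. exists (Fun f vs), (Fun f ws).
    split; [constructor; auto|split; [apply conv_args; auto|constructor; auto]].
  - right. exists (Fun f (pre ++ ti :: post)), (Fun f (pre ++ ui :: post)).
    split; [constructor; auto|]. split; [apply step_ctx; auto|]. split; [apply step_ctx; auto|].
    split; [constructor; auto|]. apply joinable_ctx; auto.
Qed.

Lemma refl_peak_closes R1 R2 s u : par R2 s u -> peak_closes R C R1 R2 s s u.
Proof. intros H. left. exists u, u. split; [exact H|split; [apply rst_refl|apply par_refl]]. Qed.

Theorem par_peak_closes R1 R2 :
  subtrs R1 R -> subtrs R2 R ->
  forall s t u, par R1 s t -> par R2 s u -> peak_closes R C R1 R2 s t u.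
Proof.
  intros HR1 HR2 s.
  induction s as [x|f ss IH] using term_ind_nested; intros t u H1 H2.
  - remember (Var x) as s eqn:Es. destruct H1 as [t|l r mu Hlr|f ss ts HF].
    + apply refl_peak_closes; auto.
    + apply root_peak_closes; auto.
    + discriminate.
  - remember (Fun f ss) as s eqn:Es. destruct H1 as [t|l r mu Hlr|f0 ss0 ts HF].
    + apply refl_peak_closes; auto.
    + apply root_peak_closes; auto.
    + injection Es as -> ->.
      remember (Fun f ss) as s eqn:Es. destruct H2 as [u|l r mu Hlr|f0 ss0 us HG].
      * apply peak_closes_sym, refl_peak_closes. subst. constructor; auto.
      * apply peak_closes_sym, root_peak_closes; auto. rewrite Es. constructor; auto.
      * injection Es as -> ->. apply fun_peak_closes; auto.
Qed.

End Peaks.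
End TermRewriting.

Theorem lemma10 (F : Type) (R R1 R2 C : trs F) :
  is_trs R -> left_linear R ->
  subtrs R1 R -> subtrs R2 R -> subtrs C R ->
  (forall s t u : term F, pc_peak R R s t u -> joinable R t u) ->
  forall s t u : term F,
    par_step R1 s t -> par_step R2 s u ->
    (exists v w, par_step R2 t v /\ conv C v w /\ par_step R1 u w)
    \/
    (exists t' u', par_step R1 t' t /\ step (PCPS R C) s t' /\
                   step (PCPS R C) s u' /\ par_step R2 u' u /\
                   joinable R t' u').
Proof.
  intros Htrs Hll HR1 HR2 _ Hj s t u H1 H2.
  destruct (par_peak_closes R C Htrs Hll Hj R1 R2 HR1 HR2 s t u
              (par_step_par _ _ _ H1) (par_step_par _ _ _ H2))
    as [[v [w [Hv [Hc Hw]]]]|[t' [u' [Ht [Hs1 [Hs2 [Hu Hjn]]]]]]].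
  - left. exists v, w. split; [apply par_par_step; auto|split; [auto|apply par_par_step; auto]].
  - right. exists t', u'. split; [apply par_par_step; auto|]. split; [auto|]. split; [auto|].
    split; [apply par_par_step; auto|auto].
Qed.
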